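(* In the category $\mathbf{Lens}$, the class of all morphisms that are left orthogonal to every monomorphism is exactly the class of all epimorphisms.
   Context: A lens $F\colon \mathbf{A}\to\mathbf{B}$ between small categories consists of a functor $F\colon\mathbf{A}\to\mathbf{B}$ (the get functor) together with, for each object $A$ of $\mathbf{A}$, a function $\varphi_{F,A}$ from the set of morphisms of $\mathbf{B}$ with domain $FA$ to the set of morphisms of $\mathbf{A}$ with domain $A$, such that: $F(\varphi_{F,A}b)=b$; $\varphi_{F,A}(\mathrm{id}_{FA})=\mathrm{id}_A$; and $\varphi_{F,A}(b'\circ b)=\varphi_{F,A'}(b')\circ\varphi_{F,A}(b)$ whenever $b$ has domain $FA$, $A'$ is the codomain of $\varphi_{F,A}b$, and $b'$ has domain $FA'$. $\mathbf{Lens}$ is the category of small categories and lenses, with composite of $F\colon\mathbf{A}\to\mathbf{B}$, $G\colon\mathbf{B}\to\mathbf{C}$ having get functor $G\circ F$ and puts $\varphi_{G\circ F,A}(c)=\varphi_{F,A}(\varphi_{G,FA}(c))$. A morphism $e\colon A\to B$ is left orthogonal to $m\colon C\to D$ if for all $f\colon A\to C$ and $g\colon B\to D$ with $g\circ e=m\circ f$ there is a unique $h\colon B\to C$ with $h\circ e=f$ and $m\circ h=g$. *)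

From Stdlib Require Import ProofIrrelevance.



Record Cat := {
  Ob : Type;
  Mor : Type;
  dom : Mor -> Ob;
  cod : Mor -> Ob;
  idm : Ob -> Mor;
  comp : forall g f : Mor, cod f = dom g -> Mor;
  dom_idm : forall x, dom (idm x) = x;
  cod_idm : forall x, cod (idm x) = x;
  dom_comp : forall g f H, dom (comp g f H) = dom f;
  cod_comp : forall g f H, cod (comp g f H) = cod g;
  comp_idl : forall f H, comp (idm (cod f)) f H = f;
  comp_idr : forall f H, comp f (idm (dom f)) H = f;
  comp_assoc : forall h g f H1 H2 H3 H4,
    comp h (comp g f H1) H2 = comp (comp h g H3) f H4
}.

Arguments dom {c} _.
Arguments cod {c} _.
Arguments idm {c} _.
Arguments comp {c} _ _ _.
Arguments dom_idm {c} x.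
Arguments dom_comp {c} g f H.

Record Functor (A B : Cat) := {
  fo : Ob A -> Ob B;
  fm : Mor A -> Mor B;
  fm_dom : forall f, dom (fm f) = fo (dom f);
  fm_cod : forall f, cod (fm f) = fo (cod f);
  fm_idm : forall x, fm (idm x) = idm (fo x);
  fm_comp : forall g f H H', fm (comp g f H) = comp (fm g) (fm f) H'
}.

Arguments fo {A B} _ _.
Arguments fm {A B} _ f.
Arguments fm_dom {A B} _ f.
Arguments fm_cod {A B} _ f.
Arguments fm_idm {A B} _ x.
Arguments fm_comp {A B} _ g f H H'.

Record Lens (A B : Cat) := {
  get : Functor A B;
  put : forall a : Ob A, {b : Mor B | dom b = fo get a} -> Mor A;
  put_dom : forall a b, dom (put a b) = a;
  put_get : forall a b, fm get (put a b) = proj1_sig b;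
  put_idm : forall a H, put a (exist _ (idm (fo get a)) H) = idm a;
  put_comp : forall a (b : {b : Mor B | dom b = fo get a}) (b' : Mor B)
      (Hb' : dom b' = fo get (cod (put a b)))
      (Hc : cod (proj1_sig b) = dom b')
      (Hd : dom (comp b' (proj1_sig b) Hc) = fo get a)
      (He : cod (put a b) = dom (put (cod (put a b)) (exist _ b' Hb'))),
    put a (exist _ (comp b' (proj1_sig b) Hc) Hd)
    = comp (put (cod (put a b)) (exist _ b' Hb')) (put a b) He
}.

Arguments get {A B} l.
Arguments put {A B} l a b.
Arguments put_dom {A B} l a b.
Arguments put_get {A B} l a b.
Arguments put_idm {A B} l a H.
Arguments put_comp {A B} l a b b' Hb' Hc Hd He.

Lemma sig_eq {T : Type} {P : T -> Prop} (x y : sig P) :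
  proj1_sig x = proj1_sig y -> x = y.
Proof.
  destruct x as [x px], y as [y py]; simpl; intro E; subst y.
  f_equal; apply proof_irrelevance.
Qed.

Lemma comp_congr {C : Cat} (g g' f f' : Mor C) H H' :
  g = g' -> f = f' -> comp g f H = comp g' f' H'.
Proof.
  intros -> ->; f_equal; apply proof_irrelevance.
Qed.

Lemma put_congr {A B} (l : Lens A B) x y b b' :
  x = y -> proj1_sig b = proj1_sig b' -> put l x b = put l y b'.
Proof.
  intros E E'; subst y; f_equal; apply sig_eq; exact E'.
Qed.

Definition fcomp {A B C} (G : Functor B C) (F : Functor A B) : Functor A C.
Proof.
  refine {| fo := fun a => fo G (fo F a);
            fm := fun f => fm G (fm F f) |}.
  - intro f; rewrite fm_dom, fm_dom; reflexivity.
  - intro f; rewrite fm_cod, fm_cod; reflexivity.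
  - intro x; rewrite fm_idm, fm_idm; reflexivity.
  - intros g f H H'.
    assert (H1 : cod (fm F f) = dom (fm F g))
      by (rewrite fm_cod, fm_dom, H; reflexivity).
    rewrite (fm_comp F g f H H1).
    apply fm_comp.
Defined.

Definition lcomp {A B C} (G : Lens B C) (F : Lens A B) : Lens A C.
Proof.
  refine {| get := fcomp (get G) (get F);
            put := fun a c =>
              put F a (exist _ (put G (fo (get F) a) c) (put_dom G _ c)) |}.
  - intros a c; apply put_dom.
  - intros a c; simpl; rewrite put_get; simpl; apply put_get.
  - intros a H; simpl.
    rewrite <- (put_idm F a (dom_idm (fo (get F) a))).
    apply put_congr; [reflexivity|]; simpl; apply put_idm.
  - intros a c c' Hc' Hc Hd He; simpl in *.
    set (bG := exist (fun b => dom b = fo (get F) a)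
                 (put G (fo (get F) a) c) (put_dom G _ c)).
    set (a1 := cod (put F a bG)).
    assert (Ecod : cod (put G (fo (get F) a) c) = fo (get F) a1).
    { transitivity (cod (fm (get F) (put F a bG))).
      - rewrite put_get; reflexivity.
      - apply fm_cod. }
    assert (Hb' : dom c' = fo (get G) (cod (put G (fo (get F) a) c)))
      by (rewrite Ecod; exact Hc').
    assert (E1 : dom (put G (cod (put G (fo (get F) a) c)) (exist _ c' Hb'))
                 = cod (put G (fo (get F) a) c)) by apply put_dom.
    assert (He1 : cod (put G (fo (get F) a) c)
                  = dom (put G (cod (put G (fo (get F) a) c)) (exist _ c' Hb')))
      by (symmetry; exact E1).
    pose proof (put_comp G (fo (get F) a) c c' Hb' Hc Hd He1) as PG.
    set (b' := put G (cod (put G (fo (get F) a) c)) (exist _ c' Hb')) in *.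
    assert (Hb'F : dom b' = fo (get F) (cod (put F a bG)))
      by (unfold b'; rewrite put_dom; exact Ecod).
    assert (Hc2 : cod (proj1_sig bG) = dom b') by (simpl; exact He1).
    assert (Hd2 : dom (comp b' (proj1_sig bG) Hc2) = fo (get F) a)
      by (rewrite dom_comp; apply put_dom).
    assert (He2 : cod (put F a bG) = dom (put F (cod (put F a bG)) (exist _ b' Hb'F)))
      by (rewrite put_dom; reflexivity).
    pose proof (put_comp F a bG b' Hb'F Hc2 Hd2 He2) as PF.
    transitivity (put F a (exist _ (comp b' (proj1_sig bG) Hc2) Hd2)).
    + apply put_congr; [reflexivity|]; simpl. rewrite PG.
      apply comp_congr; reflexivity.
    + rewrite PF. apply comp_congr; [|reflexivity].
      apply put_congr; [reflexivity|]; simpl.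
      unfold b'; apply put_congr; [exact Ecod|reflexivity].
Defined.

Definition lens_mono {C D : Cat} (m : Lens C D) : Prop :=
  forall (X : Cat) (g h : Lens X C), lcomp m g = lcomp m h -> g = h.

Definition lens_epi {A B : Cat} (e : Lens A B) : Prop :=
  forall (X : Cat) (g h : Lens B X), lcomp g e = lcomp h e -> g = h.

Definition lens_left_orth {A B C D : Cat} (e : Lens A B) (m : Lens C D) : Prop :=
  forall (f : Lens A C) (g : Lens B D),
    lcomp g e = lcomp m f ->
    exists! h : Lens B C, lcomp h e = f /\ lcomp m h = g.

(** Both classes coincide with the lenses that are surjective on objects.
    For a lens [e : A -> B] the image of its object map is closed under
    codomains, since [cod u = fo e (cod (put e a u))] for [u] out of [fo e a];
    surjectivity on objects therefore makes every morphism of [B] the image of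
    a put, which forces [g = h] from [g o e = h o e].  Conversely, a lens
    left orthogonal to the inclusion of its image is surjective on objects,
    and an epimorphism is too: otherwise the two copies of [B] glued along the
    image of [e] give two different lenses equalised by [e].  Finally, a mono
    in [Lens] is injective on objects and morphisms (test it on its kernel
    pair), so for surjective [e] the lower leg [g] of a commutative square
    factors through [m], with puts [put g b (m x)], giving the diagonal. *)

From Stdlib Require Import ProofIrrelevance FunctionalExtensionality ClassicalEpsilon.

Lemma lens_ext {A B} (L1 L2 : Lens A B) :
  (forall a, fo (get L1) a = fo (get L2) a) ->
  (forall f, fm (get L1) f = fm (get L2) f) ->
  (forall a x H1 H2, put L1 a (exist _ x H1) = put L2 a (exist _ x H2)) ->
  L1 = L2.
Proof.
  destruct L1 as [[fo1 fm1 d1 c1 i1 k1] P1 pd1 pg1 pi1 pc1],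
           L2 as [[fo2 fm2 d2 c2 i2 k2] P2 pd2 pg2 pi2 pc2]; simpl.
  intros Ho Hm Hp.
  pose proof (functional_extensionality _ _ Ho) as <-.
  pose proof (functional_extensionality _ _ Hm) as <-.
  assert (P1 = P2) as <-.
  { apply functional_extensionality_dep; intro a.
    apply functional_extensionality; intros [x H]; apply Hp. }
  rewrite (proof_irrelevance _ d1 d2), (proof_irrelevance _ c1 c2),
          (proof_irrelevance _ i1 i2), (proof_irrelevance _ k1 k2),
          (proof_irrelevance _ pd1 pd2), (proof_irrelevance _ pg1 pg2),
          (proof_irrelevance _ pi1 pi2), (proof_irrelevance _ pc1 pc2).
  reflexivity.
Qed.

Lemma lens_eq_fo {A B} {L1 L2 : Lens A B} :
  L1 = L2 -> forall a, fo (get L1) a = fo (get L2) a.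
Proof. intros ->; reflexivity. Qed.

Lemma lens_eq_fm {A B} {L1 L2 : Lens A B} :
  L1 = L2 -> forall f, fm (get L1) f = fm (get L2) f.
Proof. intros ->; reflexivity. Qed.

Lemma lens_eq_put {A B} {L1 L2 : Lens A B} : L1 = L2 ->
  forall a x H1 H2, put L1 a (exist _ x H1) = put L2 a (exist _ x H2).
Proof. intros -> a x H1 H2; apply put_congr; reflexivity. Qed.

Lemma fm_composable {A B} (F : Functor A B) (g f : Mor A) :
  cod f = dom g -> cod (fm F f) = dom (fm F g).
Proof. intro H; rewrite fm_cod, fm_dom, H; reflexivity. Qed.

Lemma fo_dom_eq {A B} (F : Functor A B) (u v : Mor A) :
  fm F u = fm F v -> fo F (dom u) = fo F (dom v).
Proof. intro E; rewrite <- !fm_dom, E; reflexivity. Qed.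

Lemma fo_cod_eq {A B} (F : Functor A B) (u v : Mor A) :
  fm F u = fm F v -> fo F (cod u) = fo F (cod v).
Proof. intro E; rewrite <- !fm_cod, E; reflexivity. Qed.

Lemma fm_idm_eq {A B} (F : Functor A B) (x y : Ob A) :
  fo F x = fo F y -> fm F (idm x) = fm F (idm y).
Proof. intro E; rewrite !fm_idm, E; reflexivity. Qed.

Lemma fm_comp_eq {A B} (F : Functor A B) (g f g' f' : Mor A) H H' :
  fm F g = fm F g' -> fm F f = fm F f' -> fm F (comp g f H) = fm F (comp g' f' H').
Proof.
  intros Eg Ef.
  rewrite (fm_comp F g f H (fm_composable F g f H)),
          (fm_comp F g' f' H' (fm_composable F g' f' H')).
  apply comp_congr; assumption.
Qed.

Lemma put_comp_eq {A B} (l : Lens A B) a (x : Mor B) (Hx : dom x = fo (get l) a)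
  (y : Mor B) (Hy : dom y = fo (get l) (cod (put l a (exist _ x Hx))))
  (z : Mor B) (Hz : dom z = fo (get l) a) (Hc : cod x = dom y) :
  z = comp y x Hc -> forall He,
  put l a (exist _ z Hz) = comp (put l _ (exist _ y Hy)) (put l a (exist _ x Hx)) He.
Proof. intros -> He; exact (put_comp l a (exist _ x Hx) y Hy Hc Hz He). Qed.

Definition id_functor (B : Cat) : Functor B B.
Proof.
  refine {| fo := fun x => x; fm := fun u => u |}; try reflexivity.
  intros; apply comp_congr; reflexivity.
Defined.

Definition id_lens (B : Cat) : Lens B B.
Proof.
  refine {| get := id_functor B; put := fun x xi => proj1_sig xi |}.
  - intros x xi; exact (proj2_sig xi).
  - reflexivity.
  - reflexivity.
  - intros; simpl; apply comp_congr; reflexivity.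
Defined.

Lemma lcomp_id_l {A B} (e : Lens A B) : lcomp (id_lens B) e = e.
Proof.
  apply lens_ext; try reflexivity.
  intros; simpl; apply put_congr; reflexivity.
Qed.

Lemma lcomp_assoc {A B C D} (h : Lens C D) (g : Lens B C) (f : Lens A B) :
  lcomp h (lcomp g f) = lcomp (lcomp h g) f.
Proof.
  apply lens_ext; try reflexivity.
  intros; simpl; apply put_congr; [reflexivity|]; simpl.
  apply put_congr; [reflexivity|]; simpl.
  apply put_congr; reflexivity.
Qed.

Definition lens_ob_surj {A B} (e : Lens A B) : Prop :=
  forall b, exists a, fo (get e) a = b.

Lemma lens_image_cod_closed {A B} (e : Lens A B) (u : Mor B) :
  (exists a, fo (get e) a = dom u) -> exists a, fo (get e) a = cod u.
Proof.
  intros [a Ha]; exists (cod (put e a (exist _ u (eq_sym Ha)))).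
  rewrite <- fm_cod, put_get; reflexivity.
Qed.

Lemma lens_ob_surj_epi {A B} (e : Lens A B) : lens_ob_surj e -> lens_epi e.
Proof.
  intros Hs X g h Hgh; apply lens_ext.
  - intro b; destruct (Hs b) as [a <-]; exact (lens_eq_fo Hgh a).
  - intro v; destruct (Hs (dom v)) as [a Ha].
    pose proof (put_get e a (exist _ v (eq_sym Ha))) as Ev; simpl in Ev.
    rewrite <- Ev; exact (lens_eq_fm Hgh _).
  - intros b x H1 H2; destruct (Hs b) as [a <-].
    pose proof (lens_eq_put Hgh a x H1 H2) as Q; simpl in Q.
    apply (f_equal (fm (get e))) in Q; rewrite !put_get in Q; exact Q.
Qed.

Section CodClosedSubcategory.
Variables (B : Cat) (S : Ob B -> Prop).
Hypothesis S_cod : forall u : Mor B, S (dom u) -> S (cod u).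

Definition sub_ob := {b : Ob B | S b}.
Definition sub_mor := {u : Mor B | S (dom u)}.

Definition sub_dom (u : sub_mor) : sub_ob := exist _ (dom (proj1_sig u)) (proj2_sig u).
Definition sub_cod (u : sub_mor) : sub_ob :=
  exist _ (cod (proj1_sig u)) (S_cod _ (proj2_sig u)).
Definition sub_idm (x : sub_ob) : sub_mor :=
  exist _ (idm (proj1_sig x)) (eq_ind_r S (proj2_sig x) (dom_idm _)).
Definition sub_comp (q p : sub_mor) (H : sub_cod p = sub_dom q) : sub_mor :=
  exist _ (comp (proj1_sig q) (proj1_sig p) (f_equal (@proj1_sig _ _) H))
    (eq_ind_r S (proj2_sig p) (dom_comp _ _ _)).

Definition sub_cat : Cat.
Proof.
  refine {| Ob := sub_ob; Mor := sub_mor; dom := sub_dom; cod := sub_cod;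
            idm := sub_idm; comp := sub_comp |}.
  - intros [x px]; apply sig_eq; apply dom_idm.
  - intros [x px]; apply sig_eq; apply cod_idm.
  - intros [g pg] [f pf] H; apply sig_eq; apply dom_comp.
  - intros [g pg] [f pf] H; apply sig_eq; apply cod_comp.
  - intros [f pf] H; apply sig_eq; apply comp_idl.
  - intros [f pf] H; apply sig_eq; apply comp_idr.
  - intros [h ph] [g pg] [f pf] H1 H2 H3 H4; apply sig_eq; apply comp_assoc.
Defined.

Definition sub_incl_functor : Functor sub_cat B.
Proof.
  refine {| fo := fun x : Ob sub_cat => proj1_sig x; fm := fun u : Mor sub_cat => proj1_sig u |};
    try reflexivity.
  intros; simpl; apply comp_congr; reflexivity.
Defined.

Definition sub_incl : Lens sub_cat B.
Proof.
  refine {| get := sub_incl_functor;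
            put := fun (x : Ob sub_cat) xi =>
              (exist _ (proj1_sig xi) (eq_ind_r S (proj2_sig x) (proj2_sig xi)) : Mor sub_cat) |}.
  - intros x xi; apply sig_eq; exact (proj2_sig xi).
  - reflexivity.
  - intros; apply sig_eq; reflexivity.
  - intros; apply sig_eq; simpl; apply comp_congr; reflexivity.
Defined.

Lemma sub_incl_mono : lens_mono sub_incl.
Proof.
  intros X g h E; apply lens_ext.
  - intro a; apply sig_eq; exact (lens_eq_fo E a).
  - intro f; apply sig_eq; exact (lens_eq_fm E f).
  - intros a x H1 H2.
    pose proof (lens_eq_put E a (proj1_sig x) (f_equal (@proj1_sig _ _) H1)
                  (f_equal (@proj1_sig _ _) H2)) as P; simpl in P.
    etransitivity; [|etransitivity; [exact P|]];
      apply put_congr; try reflexivity; apply sig_eq; reflexivity.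
Qed.

Variables (A : Cat) (e : Lens A B).
Hypothesis S_image : forall a, S (fo (get e) a).

Definition sub_corestrict_functor : Functor A sub_cat.
Proof.
  refine {| fo := fun a => (exist _ (fo (get e) a) (S_image a) : Ob sub_cat);
            fm := fun u => (exist _ (fm (get e) u)
                              (eq_ind_r S (S_image (dom u)) (fm_dom _ u)) : Mor sub_cat) |}.
  - intro f; apply sig_eq; apply fm_dom.
  - intro f; apply sig_eq; apply fm_cod.
  - intro f; apply sig_eq; apply fm_idm.
  - intros; apply sig_eq; apply fm_comp.
Defined.

Definition sub_corestrict : Lens A sub_cat.
Proof.
  refine {| get := sub_corestrict_functor;
            put := fun a xi => put e a (exist _ (proj1_sig (proj1_sig xi))
                                  (f_equal (@proj1_sig _ _) (proj2_sig xi))) |}.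
  - intros; apply put_dom.
  - intros; apply sig_eq; apply put_get.
  - intros; rewrite <- (put_idm e a (dom_idm _)); apply put_congr; reflexivity.
  - intros; eapply put_comp_eq; reflexivity.
Defined.

Lemma sub_incl_corestrict : lcomp sub_incl sub_corestrict = e.
Proof.
  apply lens_ext; try reflexivity.
  intros; simpl; apply put_congr; reflexivity.
Qed.

End CodClosedSubcategory.

Lemma left_orth_monos_ob_surj {A B} (e : Lens A B) :
  (forall C D (m : Lens C D), lens_mono m -> lens_left_orth e m) -> lens_ob_surj e.
Proof.
  intros Horth b.
  set (S := fun b => exists a, fo (get e) a = b).
  pose proof (lens_image_cod_closed e) as S_cod.
  assert (S_image : forall a, S (fo (get e) a)) by (intro a; exists a; reflexivity).
  assert (square : lcomp (id_lens B) e
                   = lcomp (sub_incl B S S_cod) (sub_corestrict B S S_cod A e S_image))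
    by (rewrite lcomp_id_l, sub_incl_corestrict; reflexivity).
  destruct (Horth _ _ _ (sub_incl_mono B S S_cod) _ _ square) as [h [[_ Hh] _]].
  pose proof (lens_eq_fo Hh b) as Eb; simpl in Eb.
  rewrite <- Eb; exact (proj2_sig (fo (get h) b)).
Qed.

Section Doubling.
Variables (B : Cat) (U : Ob B -> bool).
Hypothesis U_cod : forall u : Mor B, U (dom u) = true -> U (cod u) = true.

Definition mark (k : bool) (b : Ob B) : bool := andb k (negb (U b)).

Lemma mark_true k b : mark k b = true -> U b = false.
Proof. unfold mark; destruct k, (U b); simpl; congruence. Qed.

Lemma mark_fixed k b : (k = true -> U b = false) -> mark k b = k.
Proof. unfold mark; destruct k, (U b); simpl; intuition congruence. Qed.

Lemma mark_mark k u : mark (mark k (dom u)) (cod u) = mark k (cod u).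
Proof.
  unfold mark; pose proof (U_cod u) as Hu.
  destruct k, (U (dom u)), (U (cod u)); simpl; intuition congruence.
Qed.

(* Two copies of [B] glued along [U]: the flag [true] (second copy) is allowed
   only outside [U], and [mark] drops it when a morphism enters [U]. *)
Definition dbl_ob := {p : Ob B * bool | snd p = true -> U (fst p) = false}.
Definition dbl_mor := {p : Mor B * bool | snd p = true -> U (dom (fst p)) = false}.

Definition dbl_dom (p : dbl_mor) : dbl_ob :=
  exist _ (dom (fst (proj1_sig p)), snd (proj1_sig p)) (proj2_sig p).
Definition dbl_cod (p : dbl_mor) : dbl_ob :=
  exist _ (cod (fst (proj1_sig p)), mark (snd (proj1_sig p)) (cod (fst (proj1_sig p))))
    (mark_true _ _).
Definition dbl_idm (x : dbl_ob) : dbl_mor :=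
  exist _ (idm (fst (proj1_sig x)), snd (proj1_sig x))
    (eq_ind_r (fun b => snd (proj1_sig x) = true -> U b = false) (proj2_sig x) (dom_idm _)).
Definition dbl_comp (q p : dbl_mor) (H : dbl_cod p = dbl_dom q) : dbl_mor :=
  exist _ (comp (fst (proj1_sig q)) (fst (proj1_sig p))
             (f_equal (fun z => fst (proj1_sig z)) H), snd (proj1_sig p))
    (eq_ind_r (fun b => snd (proj1_sig p) = true -> U b = false) (proj2_sig p)
       (dom_comp _ _ _)).

Definition dbl_cat : Cat.
Proof.
  refine {| Ob := dbl_ob; Mor := dbl_mor; dom := dbl_dom; cod := dbl_cod;
            idm := dbl_idm; comp := dbl_comp |}.
  - intros [[x k] px]; apply sig_eq; simpl; rewrite dom_idm; reflexivity.
  - intros [[x k] px]; apply sig_eq; simpl; rewrite cod_idm, mark_fixed; auto.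
  - intros [[g kg] pg] [[f kf] pf] H; apply sig_eq; simpl; rewrite dom_comp; reflexivity.
  - intros [[g kg] pg] [[f kf] pf] H; apply sig_eq; simpl; rewrite !cod_comp.
    pose proof (f_equal (fun z => fst (proj1_sig z)) H) as Hgf.
    pose proof (f_equal (fun z => snd (proj1_sig z)) H) as Hk; simpl in Hgf, Hk.
    subst kg; rewrite Hgf, mark_mark; reflexivity.
  - intros [[f k] pf] H; apply sig_eq; simpl; rewrite comp_idl; reflexivity.
  - intros [[f k] pf] H; apply sig_eq; simpl; rewrite comp_idr; reflexivity.
  - intros [[h kh] ph] [[g kg] pg] [[f kf] pf] H1 H2 H3 H4; apply sig_eq; simpl.
    f_equal; apply comp_assoc.
Defined.

Definition dbl_copy_functor (k : bool) : Functor B dbl_cat.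
Proof.
  refine {| fo := fun b => (exist _ (b, mark k b) (mark_true k b) : Ob dbl_cat);
            fm := fun u => (exist _ (u, mark k (dom u)) (mark_true k (dom u)) : Mor dbl_cat) |}.
  - intro f; apply sig_eq; reflexivity.
  - intro f; apply sig_eq; simpl; rewrite mark_mark; reflexivity.
  - intro x; apply sig_eq; simpl; rewrite dom_idm; reflexivity.
  - intros g f H H'; apply sig_eq; simpl; rewrite dom_comp.
    f_equal; apply comp_congr; reflexivity.
Defined.

Definition dbl_copy (k : bool) : Lens B dbl_cat.
Proof.
  refine {| get := dbl_copy_functor k; put := fun b xi => fst (proj1_sig (proj1_sig xi)) |}.
  - intros b [[[x t] px] H]; exact (f_equal (fun z => fst (proj1_sig z)) H).
  - intros b [[[x t] px] H]; apply sig_eq; simpl.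
    pose proof (f_equal (fun z => fst (proj1_sig z)) H) as Hx.
    pose proof (f_equal (fun z => snd (proj1_sig z)) H) as Ht; simpl in Hx, Ht.
    rewrite Hx, Ht; reflexivity.
  - reflexivity.
  - intros; simpl; apply comp_congr; reflexivity.
Defined.

Lemma lens_epi_cod_closed_all {A} (e : Lens A B) :
  lens_epi e -> (forall a, U (fo (get e) a) = true) -> forall b, U b = true.
Proof.
  intros He Ue b.
  assert (E : dbl_copy true = dbl_copy false).
  { apply He, lens_ext.
    - intro a; apply sig_eq; simpl; rewrite (Ue a); reflexivity.
    - intro f; apply sig_eq; simpl; rewrite fm_dom, (Ue _); reflexivity.
    - intros; simpl; apply put_congr; reflexivity. }
  pose proof (f_equal (fun z => snd (proj1_sig z)) (lens_eq_fo E b)) as Hb; simpl in Hb.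
  destruct (U b); [reflexivity | discriminate].
Qed.

End Doubling.

Lemma lens_epi_ob_surj {A B} (e : Lens A B) : lens_epi e -> lens_ob_surj e.
Proof.
  intros He.
  set (U := fun b => if excluded_middle_informative (exists a, fo (get e) a = b)
                     then true else false).
  assert (U_spec : forall b, U b = true <-> exists a, fo (get e) a = b).
  { intro b; unfold U; destruct excluded_middle_informative; intuition discriminate. }
  assert (U_cod : forall u, U (dom u) = true -> U (cod u) = true).
  { intros u Hu; apply U_spec, lens_image_cod_closed, U_spec; exact Hu. }
  intro b; apply U_spec, (lens_epi_cod_closed_all B U U_cod e He).
  intro a; apply U_spec; exists a; reflexivity.
Qed.

Section KernelPair.
Variables (C D : Cat) (m : Lens C D).

Definition kp_ob := {p : Ob C * Ob C | fo (get m) (fst p) = fo (get m) (snd p)}.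
Definition kp_mor := {p : Mor C * Mor C | fm (get m) (fst p) = fm (get m) (snd p)}.

Definition kp_dom (p : kp_mor) : kp_ob :=
  exist _ (dom (fst (proj1_sig p)), dom (snd (proj1_sig p)))
    (fo_dom_eq _ _ _ (proj2_sig p)).
Definition kp_cod (p : kp_mor) : kp_ob :=
  exist _ (cod (fst (proj1_sig p)), cod (snd (proj1_sig p)))
    (fo_cod_eq _ _ _ (proj2_sig p)).
Definition kp_idm (x : kp_ob) : kp_mor :=
  exist _ (idm (fst (proj1_sig x)), idm (snd (proj1_sig x)))
    (fm_idm_eq _ _ _ (proj2_sig x)).
Definition kp_comp (q p : kp_mor) (H : kp_cod p = kp_dom q) : kp_mor :=
  exist _ (comp (fst (proj1_sig q)) (fst (proj1_sig p))
             (f_equal (fun z => fst (proj1_sig z)) H),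
           comp (snd (proj1_sig q)) (snd (proj1_sig p))
             (f_equal (fun z => snd (proj1_sig z)) H))
    (fm_comp_eq _ _ _ _ _ _ _ (proj2_sig q) (proj2_sig p)).

Definition kp_cat : Cat.
Proof.
  refine {| Ob := kp_ob; Mor := kp_mor; dom := kp_dom; cod := kp_cod;
            idm := kp_idm; comp := kp_comp |}.
  - intros [[x1 x2] px]; apply sig_eq; simpl; rewrite !dom_idm; reflexivity.
  - intros [[x1 x2] px]; apply sig_eq; simpl; rewrite !cod_idm; reflexivity.
  - intros [[g1 g2] pg] [[f1 f2] pf] H; apply sig_eq; simpl; rewrite !dom_comp; reflexivity.
  - intros [[g1 g2] pg] [[f1 f2] pf] H; apply sig_eq; simpl; rewrite !cod_comp; reflexivity.
  - intros [[f1 f2] pf] H; apply sig_eq; simpl; rewrite !comp_idl; reflexivity.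
  - intros [[f1 f2] pf] H; apply sig_eq; simpl; rewrite !comp_idr; reflexivity.
  - intros [[h1 h2] ph] [[g1 g2] pg] [[f1 f2] pf] H1 H2 H3 H4; apply sig_eq; simpl.
    f_equal; apply comp_assoc.
Defined.

Definition kp_fst_functor : Functor kp_cat C.
Proof.
  refine {| fo := fun x : Ob kp_cat => fst (proj1_sig x);
            fm := fun p : Mor kp_cat => fst (proj1_sig p) |}; try reflexivity.
  intros; simpl; apply comp_congr; reflexivity.
Defined.

Definition kp_snd_functor : Functor kp_cat C.
Proof.
  refine {| fo := fun x : Ob kp_cat => snd (proj1_sig x);
            fm := fun p : Mor kp_cat => snd (proj1_sig p) |}; try reflexivity.
  intros; simpl; apply comp_congr; reflexivity.
Defined.

Lemma kp_put_fst_dom (x : kp_ob) (u : {u : Mor C | dom u = fst (proj1_sig x)}) :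
  dom (fm (get m) (proj1_sig u)) = fo (get m) (snd (proj1_sig x)).
Proof. rewrite fm_dom, (proj2_sig u), (proj2_sig x); reflexivity. Qed.

Lemma kp_put_snd_dom (x : kp_ob) (u : {u : Mor C | dom u = snd (proj1_sig x)}) :
  dom (fm (get m) (proj1_sig u)) = fo (get m) (fst (proj1_sig x)).
Proof. rewrite fm_dom, (proj2_sig u), (proj2_sig x); reflexivity. Qed.

Definition kp_put_fst (x : kp_ob) (u : {u : Mor C | dom u = fst (proj1_sig x)}) : kp_mor :=
  exist _ (proj1_sig u, put m (snd (proj1_sig x)) (exist _ _ (kp_put_fst_dom x u)))
    (eq_sym (put_get m _ (exist _ _ (kp_put_fst_dom x u)))).

Definition kp_put_snd (x : kp_ob) (u : {u : Mor C | dom u = snd (proj1_sig x)}) : kp_mor :=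
  exist _ (put m (fst (proj1_sig x)) (exist _ _ (kp_put_snd_dom x u)), proj1_sig u)
    (put_get m _ (exist _ _ (kp_put_snd_dom x u))).

Definition kp_fst : Lens kp_cat C.
Proof.
  refine {| get := kp_fst_functor; put := kp_put_fst |}.
  - intros [[x1 x2] px] [u pu]; apply sig_eq; simpl in *.
    rewrite put_dom, pu; reflexivity.
  - reflexivity.
  - intros [[x1 x2] px] H; apply sig_eq; simpl in *; f_equal.
    rewrite <- (put_idm m x2 (dom_idm _)); apply put_congr; [reflexivity|]; simpl.
    rewrite fm_idm, px; reflexivity.
  - intros [[x1 x2] px] [b pb] b' Hb' Hc Hd He; apply sig_eq; simpl in *.
    f_equal; [apply comp_congr; reflexivity|].
    eapply put_comp_eq; apply (fm_comp _ _ _ _ (fm_composable _ _ _ Hc)).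
Defined.

Definition kp_snd : Lens kp_cat C.
Proof.
  refine {| get := kp_snd_functor; put := kp_put_snd |}.
  - intros [[x1 x2] px] [u pu]; apply sig_eq; simpl in *.
    rewrite put_dom, pu; reflexivity.
  - reflexivity.
  - intros [[x1 x2] px] H; apply sig_eq; simpl in *; f_equal.
    rewrite <- (put_idm m x1 (dom_idm _)); apply put_congr; [reflexivity|]; simpl.
    rewrite fm_idm, px; reflexivity.
  - intros [[x1 x2] px] [b pb] b' Hb' Hc Hd He; apply sig_eq; simpl in *.
    f_equal; [|apply comp_congr; reflexivity].
    eapply put_comp_eq; apply (fm_comp _ _ _ _ (fm_composable _ _ _ Hc)).
Defined.

Lemma kp_square : lcomp m kp_fst = lcomp m kp_snd.
Proof.
  apply lens_ext.
  - intros [[x1 x2] px]; exact px.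
  - intros [[u1 u2] pu]; exact pu.
  - intros [[x1 x2] px] d H1 H2; apply sig_eq; simpl; f_equal;
      apply put_congr; try reflexivity; simpl; rewrite put_get; reflexivity.
Qed.

End KernelPair.

Lemma mono_fo_inj {C D} (m : Lens C D) : lens_mono m ->
  forall c c', fo (get m) c = fo (get m) c' -> c = c'.
Proof.
  intros Hm c c' E.
  exact (lens_eq_fo (Hm _ _ _ (kp_square C D m)) (exist _ (c, c') E)).
Qed.

Lemma mono_fm_inj {C D} (m : Lens C D) : lens_mono m ->
  forall u v, fm (get m) u = fm (get m) v -> u = v.
Proof.
  intros Hm u v E.
  exact (lens_eq_fm (Hm _ _ _ (kp_square C D m)) (exist _ (u, v) E)).
Qed.

Section LiftThroughInjective.
Variables (B C D : Cat) (m : Lens C D) (g : Lens B D).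
Hypothesis m_fo_inj : forall c c', fo (get m) c = fo (get m) c' -> c = c'.
Hypothesis m_fm_inj : forall u v, fm (get m) u = fm (get m) v -> u = v.
Hypothesis g_ob_image : forall b, exists c, fo (get m) c = fo (get g) b.

Definition lift_ob (b : Ob B) : Ob C :=
  proj1_sig (constructive_indefinite_description _ (g_ob_image b)).

Lemma lift_ob_spec b : fo (get m) (lift_ob b) = fo (get g) b.
Proof. exact (proj2_sig (constructive_indefinite_description _ (g_ob_image b))). Qed.

Lemma lift_mor_dom (u : Mor B) : dom (fm (get g) u) = fo (get m) (lift_ob (dom u)).
Proof. rewrite fm_dom, lift_ob_spec; reflexivity. Qed.

Definition lift_mor (u : Mor B) : Mor C :=
  put m (lift_ob (dom u)) (exist _ (fm (get g) u) (lift_mor_dom u)).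

Lemma lift_mor_spec u : fm (get m) (lift_mor u) = fm (get g) u.
Proof. apply put_get. Qed.

Definition lift_functor : Functor B C.
Proof.
  refine {| fo := lift_ob; fm := lift_mor |}.
  - intro u; apply put_dom.
  - intro u; apply m_fo_inj.
    rewrite <- fm_cod, lift_mor_spec, fm_cod, lift_ob_spec; reflexivity.
  - intro x; apply m_fm_inj; rewrite lift_mor_spec, !fm_idm, lift_ob_spec; reflexivity.
  - intros v u H H'; apply m_fm_inj.
    rewrite lift_mor_spec, (fm_comp (get g) v u H (fm_composable _ _ _ H)),
            (fm_comp (get m) _ _ H' (fm_composable _ _ _ H')).
    apply comp_congr; symmetry; apply lift_mor_spec.
Defined.

Lemma lift_put_dom (b : Ob B) (x : {c : Mor C | dom c = lift_ob b}) :
  dom (fm (get m) (proj1_sig x)) = fo (get g) b.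
Proof. rewrite fm_dom, (proj2_sig x), lift_ob_spec; reflexivity. Qed.

Definition lift_put (b : Ob B) (x : {c : Mor C | dom c = lift_ob b}) : Mor B :=
  put g b (exist _ (fm (get m) (proj1_sig x)) (lift_put_dom b x)).

Definition lift_lens : Lens B C.
Proof.
  refine {| get := lift_functor; put := lift_put |}.
  - intros; apply put_dom.
  - intros b x; apply m_fm_inj; simpl.
    rewrite lift_mor_spec; unfold lift_put; rewrite put_get; reflexivity.
  - intros b H; unfold lift_put; rewrite <- (put_idm g b (dom_idm _)).
    apply put_congr; [reflexivity|]; simpl; rewrite fm_idm, lift_ob_spec; reflexivity.
  - intros b [x px] y Hy Hc Hd He; unfold lift_put; simpl.
    eapply put_comp_eq; apply (fm_comp _ _ _ _ (fm_composable _ _ _ Hc)).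
Defined.

Lemma lcomp_lift : lcomp m lift_lens = g.
Proof.
  apply lens_ext.
  - exact lift_ob_spec.
  - exact lift_mor_spec.
  - intros b x H1 H2; simpl; unfold lift_put.
    apply put_congr; [reflexivity|]; simpl; apply put_get.
Qed.

End LiftThroughInjective.

Lemma lens_epi_left_orth_mono {A B} (e : Lens A B) : lens_epi e ->
  forall C D (m : Lens C D), lens_mono m -> lens_left_orth e m.
Proof.
  intros He C D m Hm f g Hsq.
  assert (g_ob_image : forall b, exists c, fo (get m) c = fo (get g) b).
  { intro b; destruct (lens_epi_ob_surj e He b) as [a <-].
    exists (fo (get f) a); exact (eq_sym (lens_eq_fo Hsq a)). }
  set (h := lift_lens B C D m g (mono_fo_inj m Hm) (mono_fm_inj m Hm) g_ob_image).
  assert (Hmh : lcomp m h = g) by apply lcomp_lift.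
  assert (Hhe : lcomp h e = f)
    by (apply Hm; rewrite lcomp_assoc, Hmh; exact Hsq).
  exists h; split; [split; assumption|].
  intros h' [Hh'e _]; apply He; rewrite Hhe, Hh'e; reflexivity.
Qed.

Theorem corollary6p6 (A B : Cat) (e : Lens A B) :
  (forall (C D : Cat) (m : Lens C D), lens_mono m -> lens_left_orth e m)
  <-> lens_epi e.
Proof.
  split.
  - intro Horth; apply lens_ob_surj_epi, left_orth_monos_ob_surj, Horth.
  - apply lens_epi_left_orth_mono.
Qed.
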